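(* Let $(\mathcal A,\mathcal T,(-))$ be a meta-tangible $\mathcal T$-group module triple. Then the relation $\preceq_\circ$ on $\mathcal A$ defined by $b\preceq_\circ b'$ iff $b'=b+c^\circ$ for some $c\in\mathcal A$ is a $\mathcal T$-surpassing relation, and $(\mathcal A,\mathcal T,(-),\preceq_\circ)$ is a (meta-tangible) $\mathcal T$-system.
   Context: $(\mathcal A,+,\mathbb 0)$ commutative monoid, $\mathcal T\subseteq\mathcal A\setminus\{\mathbb 0\}$. A negation map is $(-):\mathcal A\to\mathcal A$ with $(-)(b_1+b_2)=(-)b_1+(-)b_2$, $(-)((-)b)=b$, $(-)\mathbb 0=\mathbb 0$, $(-)\mathcal T\subseteq\mathcal T$. Write $b(-)c:=b+((-)c)$, $b^\circ:=b(-)b$, $\mathcal A^\circ=\{b^\circ:b\in\mathcal A\}$. A $\mathcal T$-triple $(\mathcal A,\mathcal T,(-))$: such data with an action $\mathcal T\times\mathcal A\to\mathcal A$ satisfying $a(b_1+b_2)=ab_1+ab_2$, $a\mathbb 0=\mathbb 0$, $(-)(ab)=((-)a)b=a((-)b)$, with $\mathcal T\cap\mathcal A^\circ=\emptyset$ and every element of $\mathcal A$ a finite sum of elements of $\mathcal T$. It is a $\mathcal T$-group module triple if moreover $\mathcal T$ is a group with identity $\mathbb 1$ whose multiplication is the restriction of the action, $\mathbb 1b=b$ and $(a_1a_2)b=a_1(a_2b)$. Meta-tangible: $a+b\in\mathcal T$ for all $a,b\in\mathcal T$ with $b\neq(-)a$. A $\mathcal T$-surpassing relation $\preceq$ is a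 reflexive transitive relation on $\mathcal A$ with: (i) $b\preceq b+c^\circ$ for all $b,c$; (ii) $b_1\preceq b_2\Rightarrow(-)b_1\preceq(-)b_2$; (iii) $b_1\preceq b_2,\ b_1'\preceq b_2'\Rightarrow b_1+b_1'\preceq b_2+b_2'$; (iv) $a\in\mathcal T$, $b_1\preceq b_2\Rightarrow ab_1\preceq ab_2$; (v) $a\preceq b$ with $a,b\in\mathcal T$ implies $a=b$; (vi) $b^\circ\not\preceq a$ for all $b\in\mathcal A$, $a\in\mathcal T$. A $\mathcal T$-system is $(\mathcal A,\mathcal T,(-),\preceq)$ with $(\mathcal A,\mathcal T,(-))$ a $\mathcal T$-triple, $\preceq$ a $\mathcal T$-surpassing relation, and such that $\mathbb 0\preceq a+b$ with $a,b\in\mathcal T$ implies $b=(-)a$. *)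

From Stdlib Require Import List.
Import ListNotations.

Section TDefs.
Context {A : Type} (add : A -> A -> A) (zero : A) (T : A -> Prop)
        (neg : A -> A) (act : A -> A -> A).

Definition circ (b : A) : A := add b (neg b).

Definition lsum (l : list A) : A := fold_right add zero l.

Definition is_comm_monoid : Prop :=
  (forall x y z, add x (add y z) = add (add x y) z) /\
  (forall x y, add x y = add y x) /\
  (forall x, add zero x = x).

Definition is_negation_map : Prop :=
  (forall b1 b2, neg (add b1 b2) = add (neg b1) (neg b2)) /\
  (forall b, neg (neg b) = b) /\
  neg zero = zero /\
  (forall a, T a -> T (neg a)).

(* (A, T, (-)) is a T-triple, with action T x A -> A given by act
   (only its values act a b with T a matter). *)
Definition is_T_triple : Prop :=
  is_comm_monoid /\
  ~ T zero /\
  is_negation_map /\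
  (forall a b1 b2, T a -> act a (add b1 b2) = add (act a b1) (act a b2)) /\
  (forall a, T a -> act a zero = zero) /\
  (forall a b, T a -> neg (act a b) = act (neg a) b /\ act (neg a) b = act a (neg b)) /\
  (forall b, ~ T (circ b)) /\
  (forall b, exists l : list A, Forall T l /\ b = lsum l).

Definition is_T_group_module_triple : Prop :=
  is_T_triple /\
  exists one : A,
    T one /\
    (forall a1 a2, T a1 -> T a2 -> T (act a1 a2)) /\
    (forall a, T a -> act a one = a) /\
    (forall a, T a -> exists a', T a' /\ act a a' = one /\ act a' a = one) /\
    (forall b, act one b = b) /\
    (forall a1 a2 b, T a1 -> T a2 -> act (act a1 a2) b = act a1 (act a2 b)).

Definition meta_tangible : Prop :=
  forall a b, T a -> T b -> b <> neg a -> T (add a b).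

Definition is_T_surpassing (R : A -> A -> Prop) : Prop :=
  (forall b, R b b) /\
  (forall b1 b2 b3, R b1 b2 -> R b2 b3 -> R b1 b3) /\
  (forall b c, R b (add b (circ c))) /\
  (forall b1 b2, R b1 b2 -> R (neg b1) (neg b2)) /\
  (forall b1 b2 b1' b2', R b1 b2 -> R b1' b2' -> R (add b1 b1') (add b2 b2')) /\
  (forall a b1 b2, T a -> R b1 b2 -> R (act a b1) (act a b2)) /\
  (forall a b, T a -> T b -> R a b -> a = b) /\
  (forall b a, T a -> ~ R (circ b) a).

Definition is_T_system (R : A -> A -> Prop) : Prop :=
  is_T_triple /\ is_T_surpassing R /\
  (forall a b, T a -> T b -> R zero (add a b) -> b = neg a).

Definition circ_rel (b b' : A) : Prop := exists c, b' = add b (circ c).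

End TDefs.

(** Since [(b + c)° = b° + c°], the relation [⪯∘] is a preorder compatible
    with sums, negation and the tangible action: the quasi-zeros added on the
    right simply accumulate.  The two conditions involving tangible elements
    both reduce to meta-tangibility: if [b = a + c°] with [a <> b] tangible,
    then [b (-) a = (a + c)°] is a sum of two tangible elements which are not
    negatives of each other, hence tangible, contradicting [T ∩ A° = ∅]; and if
    [a + b = c°] with [b <> (-)a] then [a + b] is tangible, for the same
    contradiction. *)

From Stdlib Require Import Classical.

Section QuasiZeros.

Context {A : Type} (add : A -> A -> A) (neg : A -> A).
Hypothesis add_assoc : forall x y z, add x (add y z) = add (add x y) z.
Hypothesis add_comm : forall x y, add x y = add y x.
Hypothesis neg_add : forall b1 b2, neg (add b1 b2) = add (neg b1) (neg b2).
Hypothesis neg_involutive : forall b, neg (neg b) = b.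

Local Notation circ := (circ add neg).
Local Notation circ_rel := (circ_rel add neg).

Lemma add_add_swap x y z w : add (add x y) (add z w) = add (add x z) (add y w).
Proof.
  rewrite <- !add_assoc. f_equal. rewrite !add_assoc. f_equal. apply add_comm.
Qed.

Lemma circ_add x y : circ (add x y) = add (circ x) (circ y).
Proof. unfold circ. rewrite neg_add. apply add_add_swap. Qed.

Lemma neg_circ c : neg (circ c) = circ c.
Proof. unfold circ. rewrite neg_add, neg_involutive. apply add_comm. Qed.

Lemma circ_rel_refl (zero : A) :
  (forall x, add zero x = x) -> neg zero = zero -> forall b, circ_rel b b.
Proof.
  intros add0x neg0 b. exists zero.
  unfold circ. rewrite neg0, add0x, add_comm, add0x. reflexivity.
Qed.

Lemma circ_rel_trans b1 b2 b3 : circ_rel b1 b2 -> circ_rel b2 b3 -> circ_rel b1 b3.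
Proof.
  intros [c ->] [d ->]. exists (add c d). rewrite circ_add, add_assoc. reflexivity.
Qed.

Lemma circ_rel_add_circ b c : circ_rel b (add b (circ c)).
Proof. exists c. reflexivity. Qed.

Lemma circ_rel_neg b1 b2 : circ_rel b1 b2 -> circ_rel (neg b1) (neg b2).
Proof. intros [c ->]. exists c. rewrite neg_add, neg_circ. reflexivity. Qed.

Lemma circ_rel_add b1 b2 b1' b2' :
  circ_rel b1 b2 -> circ_rel b1' b2' -> circ_rel (add b1 b1') (add b2 b2').
Proof.
  intros [c ->] [d ->]. exists (add c d). rewrite circ_add. apply add_add_swap.
Qed.

Lemma circ_rel_act (act : A -> A -> A) (a : A) :
  (forall b1 b2, act a (add b1 b2) = add (act a b1) (act a b2)) ->
  (forall b, neg (act a b) = act a (neg b)) ->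
  forall b1 b2, circ_rel b1 b2 -> circ_rel (act a b1) (act a b2).
Proof.
  intros actD act_neg b1 b2 [c ->]. exists (act a c).
  unfold circ. rewrite !actD, act_neg. reflexivity.
Qed.

Section Tangible.

Variable T : A -> Prop.
Hypothesis circ_not_tangible : forall b, ~ T (circ b).
Hypothesis neg_tangible : forall a, T a -> T (neg a).
Hypothesis meta : meta_tangible add T neg.

Lemma circ_not_circ_rel_tangible b a : T a -> ~ circ_rel (circ b) a.
Proof.
  intros Ta [c Ec]. apply (circ_not_tangible (add b c)).
  rewrite circ_add, <- Ec. exact Ta.
Qed.

Lemma circ_rel_tangible_eq a b : T a -> T b -> circ_rel a b -> a = b.
Proof.
  intros Ta Tb [c Ec].
  destruct (classic (a = b)) as [|a_neq_b]; [assumption | exfalso].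
  assert (neg_neq : neg a <> neg b).
  { intros E. apply a_neq_b. rewrite <- (neg_involutive a), E. apply neg_involutive. }
  assert (b_sub_a : add b (neg a) = circ (add a c)).
  { rewrite Ec, circ_add, <- add_assoc, (add_comm (circ c)), add_assoc. reflexivity. }
  apply (circ_not_tangible (add a c)). rewrite <- b_sub_a.
  apply meta; [exact Tb | exact (neg_tangible a Ta) | exact neg_neq].
Qed.

Lemma circ_rel_zero_sum (zero : A) :
  (forall x, add zero x = x) ->
  forall a b, T a -> T b -> circ_rel zero (add a b) -> b = neg a.
Proof.
  intros add0x a b Ta Tb [c Ec]. rewrite add0x in Ec.
  destruct (classic (b = neg a)) as [|b_neq]; [assumption | exfalso].
  apply (circ_not_tangible c). rewrite <- Ec. apply meta; assumption.
Qed.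

End Tangible.

End QuasiZeros.

Theorem theorem7p35 (A : Type) (add : A -> A -> A) (zero : A) (T : A -> Prop)
    (neg : A -> A) (act : A -> A -> A) :
  is_T_group_module_triple add zero T neg act ->
  meta_tangible add T neg ->
  is_T_surpassing add T neg act (circ_rel add neg) /\
  is_T_system add zero T neg act (circ_rel add neg) /\
  meta_tangible add T neg.
Proof.
  intros [triple _] meta.
  pose proof triple as
    [[assoc [comm add0x]] [_ [[nadd [nn [neg0 negT]]] [actD [_ [act_neg [circ_nT _]]]]]]].
  assert (surpassing : is_T_surpassing add T neg act (circ_rel add neg)).
  { repeat split.
    - eapply circ_rel_refl; eassumption.
    - eapply circ_rel_trans; eassumption.
    - apply circ_rel_add_circ.
    - eapply circ_rel_neg; eassumption.
    - eapply circ_rel_add; eassumption.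
    - intros a b1 b2 Ta. apply circ_rel_act.
      + intros c1 c2. exact (actD a c1 c2 Ta).
      + intros c. destruct (act_neg a c Ta) as [-> ->]. reflexivity.
    - eapply circ_rel_tangible_eq; eassumption.
    - eapply circ_not_circ_rel_tangible; eassumption. }
  split; [exact surpassing |].
  split; [| exact meta].
  split; [exact triple |]. split; [exact surpassing |].
  eapply circ_rel_zero_sum; eassumption.
Qed.
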